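(* Let $P$ be a finite graded poset of rank $r$ (all maximal chains have length $r$) such that $J(P)$ is tCDE. Then \[\mathbb{E}(\mathrm{uni}_{J(P)};\mathrm{ddeg})=\frac{\#P}{r+2}.\]
   Context: $J(P)$ is the poset of order ideals of $P$ ordered by inclusion; $\mathrm{ddeg}(I)$ is the number of elements of $J(P)$ covered by $I$ (equivalently $\#\max(I)$); $\mathrm{uni}_{J(P)}$ is uniform; $\mathbb{E}(\mu;f)=\sum_I f(I)\mathbb{P}(\mu;I)$. $\mathcal{T}^+_p(I)=1$ iff $p\notin I$ and $p$ is minimal in $P\setminus I$; $\mathcal{T}^-_p(I)=1$ iff $p\in I$ and $p$ is maximal in $I$ (else $0$). $\mu$ is toggle-symmetric if $\mathbb{E}(\mu;\mathcal{T}^+_p)=\mathbb{E}(\mu;\mathcal{T}^-_p)$ for all $p\in P$. $J(P)$ is tCDE if $\mathbb{E}(\mu;\mathrm{ddeg})=\mathbb{E}(\mathrm{uni}_{J(P)};\mathrm{ddeg})$ for every toggle-symmetric distribution $\mu$ on $J(P)$. *)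

From HB Require Import structures.
From mathcomp Require Import all_boot all_order all_algebra.
Set Implicit Arguments. Unset Strict Implicit. Unset Printing Implicit Defensive.
Import Order.TTheory GRing.Theory Num.Theory.

Local Open Scope order_scope.

Section Defs.
Variables (d : Order.disp_t) (P : finPOrderType d).

Definition is_chain (C : {set P}) : bool :=
  [forall x in C, forall y in C, (x <= y) || (y <= x)].

Definition is_max_chain (C : {set P}) : bool :=
  is_chain C && [forall D : {set P}, is_chain D ==> (C \subset D) ==> (D == C)].

(* graded of rank r: every maximal chain has length r, i.e. r+1 elements *)
Definition graded_rank (r : nat) : Prop :=
  forall C : {set P}, is_max_chain C -> #|C| = r.+1.

Definition order_ideal (I : {set P}) : bool :=
  [forall x in I, forall y : P, (y <= x) ==> (y \in I)].

Definition ddeg (I : {set P}) : nat :=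
  #|[set K : {set P} | order_ideal K && (K \proper I) &&
      [forall L : {set P}, (order_ideal L && (K \proper L) && (L \proper I)) ==> false]]|.

Definition togp (p : P) (I : {set P}) : bool :=
  (p \notin I) && [forall q : P, (q < p) ==> (q \in I)].
Definition togm (p : P) (I : {set P}) : bool :=
  (p \in I) && [forall q : P, (p < q) ==> (q \notin I)].

Local Open Scope ring_scope.
Variable R : realFieldType.

Definition expect (mu : {set P} -> R) (f : {set P} -> R) : R :=
  \sum_(I : {set P} | order_ideal I) f I * mu I.

(* probability distributions on J(P) (values outside J(P) are irrelevant) *)
Definition is_distr (mu : {set P} -> R) : Prop :=
  (forall I, order_ideal I -> 0 <= mu I) /\
  \sum_(I : {set P} | order_ideal I) mu I = 1.

Definition uni : {set P} -> R :=
  fun _ => (#|[set I : {set P} | order_ideal I]|%:R)^-1.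

Definition toggle_symmetric (mu : {set P} -> R) : Prop :=
  forall p : P, expect mu (fun I => (togp p I)%:R) = expect mu (fun I => (togm p I)%:R).

Definition tCDE : Prop :=
  forall mu, is_distr mu -> toggle_symmetric mu ->
    expect mu (fun I => (ddeg I)%:R) = expect uni (fun I => (ddeg I)%:R).
End Defs.

(* Write rho(p) for the rank of p (length of a longest chain with top p) and
   I_k = {p | rho(p) < k} for 0 <= k <= r+1.  Each p is minimal outside I_k
   for exactly one k, namely rho(p), and maximal in I_k for exactly one k,
   namely rho(p)+1: here gradedness enters, as height and depth of p add up to
   r+2, so p is covered by an element of rank rho(p)+1 unless rho(p) = r.
   Hence the uniform distribution on the I_k is toggle-symmetric, and by tCDE
   its expected ddeg is that of uni_{J(P)}.  Since ddeg I is the number of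
   maximal elements of I, summing ddeg over the I_k counts every element of P
   once, which gives #P/(r+2). *)

From HB Require Import structures.
From mathcomp Require Import all_boot all_order all_algebra zify.
Import Order.TTheory GRing.Theory Num.Theory.
Set Implicit Arguments. Unset Strict Implicit. Unset Printing Implicit Defensive.

Local Open Scope order_scope.

Section Height.
Variables (d : Order.disp_t) (P : finPOrderType d).
Implicit Types (p q x y : P) (C D : {set P}).

Lemma is_chainP C :
  reflect {in C &, forall x y, (x <= y) || (y <= x)} (is_chain C).
Proof.
apply: (iffP forall_inP) => [h x y xC yC | h x xC].
  exact: (forall_inP (h x xC)).
by apply/forall_inP => y yC; apply: h.
Qed.

Lemma is_chainS C D : C \subset D -> is_chain D -> is_chain C.
Proof.
move=> sCD /is_chainP chD; apply/is_chainP => x y xC yC.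
by apply: chD; apply: (subsetP sCD).
Qed.

Lemma is_chain1 p : is_chain [set p].
Proof. by apply/is_chainP => x y /set1P -> /set1P ->; rewrite lexx. Qed.

Definition chain_below p C := [&& is_chain C, p \in C & [forall x in C, x <= p]].

Definition height p := \max_(C | chain_below p C) #|C|.

Lemma chain_below1 p : chain_below p [set p].
Proof.
rewrite /chain_below is_chain1 set11.
by apply/forall_inP => x /set1P ->.
Qed.

Lemma height_ge p C : chain_below p C -> (#|C| <= height p)%N.
Proof. exact: (@leq_bigmax_cond _ (chain_below p) (fun C => #|C|)). Qed.

Lemma height_witness p : exists2 C, chain_below p C & height p = #|C|.
Proof.
have : (0 < #|[pred C | chain_below p C]|)%N.
  by apply/card_gt0P; exists [set p]; rewrite inE chain_below1.
by case/(@eq_bigmax_cond _ _ (fun C : {set P} => #|C|)) => C; exists C.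
Qed.

Lemma height_gt0 p : (0 < height p)%N.
Proof. by have := height_ge (chain_below1 p); rewrite cards1. Qed.

Lemma lt_height p q : q < p -> (height q < height p)%N.
Proof.
move=> lt_qp; have le_qp := ltW lt_qp.
case: (height_witness q) => C /and3P[chC qC /forall_inP le_Cq] ->.
have pNC : p \notin C by apply/negP => /le_Cq; rewrite (lt_geF lt_qp).
have -> : #|C|.+1 = #|p |: C| by rewrite cardsU1 pNC.
apply: height_ge.
rewrite /chain_below setU11 /=; apply/andP; split.
  apply/is_chainP => x y /setU1P[-> | xC] /setU1P[-> | yC].
  - by rewrite lexx.
  - by rewrite (le_trans (le_Cq _ yC) le_qp) orbT.
  - by rewrite (le_trans (le_Cq _ xC) le_qp).
  - exact: (is_chainP _ chC).
by apply/forall_inP => x /setU1P[-> // | /le_Cq le_xq]; apply: le_trans le_qp.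
Qed.

Lemma height_pred p :
  (1 < height p)%N -> exists2 q, q < p & ((height p).-1 <= height q)%N.
Proof.
case: (height_witness p) => C /and3P[chC pC /forall_inP le_Cp] -> gt1C.
have cardCp : #|C :\ p| = (#|C|).-1 by rewrite (cardsD1 p C) pC.
have /card_gt0P[x0 x0C] : (0 < #|C :\ p|)%N by rewrite cardCp -ltnS (ltn_predK gt1C).
(* the element of C :\ p of maximal height is its top *)
case: (@arg_maxnP _ x0 (mem (C :\ p)) height x0C) => q /setD1P[qp qC] qmax.
exists q; first by rewrite lt_neqAle qp le_Cp.
rewrite -cardCp; apply: height_ge.
rewrite /chain_below (is_chainS (subsetDl _ _) chC) !inE qp qC.
apply/forall_inP => x xCp; have /setD1P[_ xC] := xCp.
have /orP[// | le_qx] := is_chainP _ chC x q xC qC.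
have [-> // | neq_xq] := eqVneq x q.
have lt_qx : q < x by rewrite lt_neqAle eq_sym neq_xq.
by move: (qmax x xCp) => /=; rewrite leqNgt lt_height.
Qed.

End Height.

Section Depth.
Variables (d : Order.disp_t) (P : finPOrderType d).
Implicit Types (p q x : P) (C : {set P}).

Definition chain_above p C := [&& is_chain C, p \in C & [forall x in C, p <= x]].

Definition depth p := height (p : P^d).

Lemma is_chain_dual (C : {set P}) : is_chain (C : {set P^d}) = is_chain C.
Proof. by apply/is_chainP/is_chainP => h x y xC yC; rewrite orbC; apply: h. Qed.

Lemma chain_below_dual p C : chain_below (p : P^d) C = chain_above p C.
Proof. by rewrite /chain_below is_chain_dual. Qed.

Lemma depth_ge p C : chain_above p C -> (#|C| <= depth p)%N.
Proof. by rewrite -chain_below_dual; apply: height_ge. Qed.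

Lemma depth_witness p : exists2 C, chain_above p C & depth p = #|C|.
Proof.
by case: (height_witness (p : P^d)) => C; rewrite chain_below_dual; exists C.
Qed.

Lemma depth_gt0 p : (0 < depth p)%N.
Proof. exact: height_gt0. Qed.

Lemma depth_pred p :
  (1 < depth p)%N -> exists2 q, p < q & ((depth p).-1 <= depth q)%N.
Proof. exact: (@height_pred _ P^d). Qed.

End Depth.

Section Levels.
Variables (d : Order.disp_t) (P : finPOrderType d).
Implicit Types (p q x y : P).

Definition prank p := (height p).-1.

Definition level_ideal k := [set x : P | (prank x < k)%N].

Lemma lt_prank p q : q < p -> (prank q < prank p)%N.
Proof. by move/lt_height; have := height_gt0 q; rewrite /prank; lia. Qed.

Lemma le_prank p q : q <= p -> (prank q <= prank p)%N.
Proof. by rewrite le_eqVlt => /predU1P[-> // | /lt_prank/ltnW]. Qed.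

Lemma order_ideal_level k : order_ideal (level_ideal k).
Proof.
apply/forall_inP => x; rewrite inE => lt_xk; apply/forallP => y; apply/implyP.
by rewrite inE => /le_prank le_yx; apply: leq_ltn_trans le_yx lt_xk.
Qed.

Lemma togp_level_ideal p k : togp p (level_ideal k) = (k == prank p).
Proof.
apply/idP/eqP => [/andP[] | ->]; last first.
  rewrite /togp inE ltnn; apply/forallP => q; apply/implyP => lt_qp.
  by rewrite inE lt_prank.
rewrite inE -leqNgt => le_kp /forallP below_in; apply/eqP.
rewrite eqn_leq le_kp leqNgt; apply/negP => lt_kp.
have [|q lt_qp le_height] := @height_pred _ _ p.
  by move: lt_kp; rewrite /prank; lia.
have := below_in q; rewrite lt_qp inE.
by move: lt_kp le_height; rewrite /prank; lia.
Qed.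

End Levels.

Section Graded.
Variables (d : Order.disp_t) (P : finPOrderType d) (r : nat).
Hypothesis graded : graded_rank P r.
Implicit Types (p q x : P) (C : {set P}).

Lemma chain_extend C : is_chain C ->
  exists2 M : {set P}, C \subset M & is_chain M /\ #|M| = r.+1.
Proof.
move=> chC; pose ext (D : {set P}) := is_chain D && (C \subset D).
have extC : ext C by rewrite /ext chC subxx.
case: (@arg_maxnP _ C ext (fun D => #|D|) extC) => M /andP[chM sCM] Mmax.
exists M => //; split=> //; apply: graded; rewrite /is_max_chain chM /=.
apply/forallP => D; apply/implyP => chD; apply/implyP => sMD.
rewrite eq_sym eqEcard sMD /=; apply: Mmax.
by rewrite /ext chD (subset_trans sCM sMD).
Qed.

Lemma chain_card_le C : is_chain C -> (#|C| <= r.+1)%N.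
Proof. by case/chain_extend => M sCM [_ <-]; apply: subset_leq_card. Qed.

Lemma height_add_depth p : (height p + depth p)%N = r.+2.
Proof.
apply/eqP; rewrite eqn_leq; apply/andP; split.
  case: (height_witness p) => C /and3P[chC pC /forall_inP le_Cp] ->.
  case: (depth_witness p) => E /and3P[chE pE /forall_inP le_pE] ->.
  have chCE : is_chain (C :|: E).
    apply/is_chainP => x y /setUP[xC | xE] /setUP[yC | yE].
    - exact: (is_chainP _ chC).
    - by rewrite (le_trans (le_Cp _ xC) (le_pE _ yE)).
    - by rewrite (le_trans (le_Cp _ yC) (le_pE _ xE)) orbT.
    - exact: (is_chainP _ chE).
  have : C :&: E \subset [set p].
    apply/subsetP => x /setIP[xC xE]; rewrite inE; apply/eqP.
    by apply: le_anti; rewrite le_Cp ?le_pE.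
  move/subset_leq_card; rewrite cards1 => le_CE1.
  by rewrite -cardsUI; have := chain_card_le chCE; lia.
case: (chain_extend (is_chain1 p)) => M; rewrite sub1set => pM [chM <-].
pose A := [set x in M | x <= p]; pose B := [set x in M | p <= x].
have sAM : A \subset M by apply/subsetP => x; rewrite inE => /andP[].
have sBM : B \subset M by apply/subsetP => x; rewrite inE => /andP[].
have belowA : chain_below p A.
  rewrite /chain_below (is_chainS sAM chM) inE pM lexx /=.
  by apply/forall_inP => x; rewrite inE => /andP[].
have aboveB : chain_above p B.
  rewrite /chain_above (is_chainS sBM chM) inE pM lexx /=.
  by apply/forall_inP => x; rewrite inE => /andP[].
have sMAB : M \subset A :|: B.
  by apply/subsetP => x xM; rewrite !inE xM; apply: (is_chainP _ chM).
have : (0 < #|A :&: B|)%N by apply/card_gt0P; exists p; rewrite !inE pM lexx.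
have := subset_leq_card sMAB; have := cardsUI A B.
by have := height_ge belowA; have := depth_ge aboveB; lia.
Qed.

Lemma prank_le p : (prank p <= r)%N.
Proof. by have := height_add_depth p; have := depth_gt0 p; rewrite /prank; lia. Qed.

Lemma togm_level_ideal p k : (k <= r.+1)%N ->
  togm p (level_ideal P k) = (k == (prank p).+1).
Proof.
move=> le_kr; apply/idP/eqP => [/andP[] | ->]; last first.
  rewrite /togm inE ltnSn; apply/forallP => q; apply/implyP => lt_pq.
  by rewrite inE -leqNgt lt_prank.
rewrite inE => lt_pk /forallP above_out; apply/eqP.
rewrite eqn_leq lt_pk andbT leqNgt; apply/negP => lt_p1k.
have HDp := height_add_depth p.
have [|q lt_pq le_depth] := @depth_pred _ _ p.
  by move: lt_p1k le_kr; rewrite /prank; lia.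
have := above_out q; rewrite lt_pq inE -leqNgt.
by have := height_add_depth q; move: lt_p1k le_depth; rewrite /prank; lia.
Qed.

End Graded.

Section LowerCovers.
Variables (d : Order.disp_t) (P : finPOrderType d).
Implicit Types (p q x y : P) (I K L : {set P}).

Definition lower_covers I := [set K : {set P} | order_ideal K && (K \proper I) &&
  [forall L : {set P}, (order_ideal L && (K \proper L) && (L \proper I)) ==> false]].

Lemma order_ideal_setD1 I p : order_ideal I -> togm p I -> order_ideal (I :\ p).
Proof.
move=> /forall_inP idI /andP[pI /forallP p_max].
apply/forall_inP => x /setD1P[xp xI]; apply/forallP => y; apply/implyP => le_yx.
rewrite !inE (implyP (forallP (idI x xI) y) le_yx) andbT.
apply: contraTneq xI => eq_yp; move: le_yx; rewrite eq_yp => le_px.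
by move: (p_max x); rewrite lt_neqAle eq_sym xp le_px.
Qed.

Lemma setD1_lower_cover I p : order_ideal I -> togm p I -> I :\ p \in lower_covers I.
Proof.
move=> idI togI; have /andP[pI _] := togI.
rewrite inE order_ideal_setD1 // properD1 //=.
apply/forallP => L; apply/implyP => /andP[/andP[_ /proper_card ltL] /proper_card ltI].
by move: ltL ltI; rewrite (cardsD1 p I) pI; lia.
Qed.

Lemma lower_coverP I K : order_ideal I -> K \in lower_covers I ->
  exists2 p, togm p I & K = I :\ p.
Proof.
move=> idI; rewrite inE => /andP[/andP[idK ltKI] /forallP no_between].
have /properP[sKI [x0 x0I x0K]] := ltKI.
have x0IK : x0 \in I :\: K by rewrite inE x0I x0K.
(* an element of I :\: K of maximal height is maximal in I, since K is an ideal *)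
case: (@arg_maxnP _ x0 (mem (I :\: K)) (@height _ P) x0IK) => q /setDP[qI qK] qmax.
have togq : togm q I.
  rewrite /togm qI; apply/forallP => z; apply/implyP => lt_qz; apply/negP => zI.
  have zK : z \notin K.
    apply: contraNN qK => zK.
    exact: (implyP (forallP (forall_inP idK z zK) q)) (ltW lt_qz).
  by move: (qmax z) => /=; rewrite inE zK zI leqNgt lt_height // => /(_ isT).
exists q => //; apply/eqP; rewrite eqEproper; apply/andP; split.
  apply/subsetP => x xK; rewrite !inE (subsetP sKI x xK) andbT.
  by apply: contraTneq xK => ->.
apply/negP => ltK; move: (no_between (I :\ q)).
by rewrite order_ideal_setD1 // ltK properD1.
Qed.

Lemma ddeg_togm I : order_ideal I -> ddeg I = #|[set p | togm p I]|.
Proof.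
move=> idI; have -> : ddeg I = #|lower_covers I| by [].
have -> : lower_covers I = (fun p => I :\ p) @: [set p | togm p I].
  apply/setP => K; apply/idP/imsetP => [/(lower_coverP idI)[p togp ->] | [p]].
    by exists p; rewrite ?inE.
  by rewrite inE => togp ->; apply: setD1_lower_cover.
apply: card_in_imset => p q; rewrite !inE => /andP[pI _] _ eq_Ip_Iq.
apply/eqP; apply: contraT => neq_pq.
by have := setD11 p I; rewrite eq_Ip_Iq !inE neq_pq pI.
Qed.

End LowerCovers.

Local Open Scope ring_scope.

Lemma sumr_count (R : pzSemiRingType) (T : Type) (s : seq T) (a : pred T) :
  \sum_(x <- s) (a x)%:R = (count a s)%:R :> R.
Proof.
by rewrite -sum1_count natr_sum [RHS]big_mkcond; apply: eq_bigr => x _; case: (a x).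
Qed.

Section Empirical.
Variables (d : Order.disp_t) (P : finPOrderType d) (R : realFieldType).
Implicit Types (s : seq {set P}) (f : {set P} -> R).

Definition empirical s : {set P} -> R := fun I => (count_mem I s)%:R / (size s)%:R.

Lemma sum_ideals_count s f : all (@order_ideal _ P) s ->
  \sum_(I : {set P} | order_ideal I) f I * (count_mem I s)%:R = \sum_(I <- s) f I.
Proof.
elim: s => [_ | J s IHs /= /andP[idJ ids]].
  by rewrite big_nil big1 // => I _; rewrite mulr0.
rewrite big_cons -(IHs ids) (bigD1 J) // [in RHS](bigD1 J) //= eqxx.
rewrite natrD mulrDr mulr1 -addrA; do 2 congr (_ + _).
apply: eq_bigr => I /andP[_ nIJ].
by rewrite eq_sym (negPf nIJ).
Qed.

Lemma expect_empirical s f : all (@order_ideal _ P) s ->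
  expect (empirical s) f = (\sum_(I <- s) f I) / (size s)%:R.
Proof.
move=> ids; rewrite /expect -sum_ideals_count // mulr_suml.
by apply: eq_bigr => I _; rewrite mulrA.
Qed.

Lemma is_distr_empirical s :
  all (@order_ideal _ P) s -> s != [::] -> is_distr (empirical s).
Proof.
move=> ids s_neq0; split=> [I _ | ]; first by rewrite divr_ge0 ?ler0n.
have := expect_empirical (fun=> 1) ids; rewrite /expect.
under eq_bigr do rewrite mul1r.
have -> : \sum_(I <- s) (1 : R) = (size s)%:R by rewrite -sum1_size natr_sum.
by move=> ->; rewrite divff // pnatr_eq0 size_eq0.
Qed.

End Empirical.

Section LevelDistribution.
Variables (d : Order.disp_t) (P : finPOrderType d) (r : nat).
Hypothesis graded : graded_rank P r.

Definition level_ideals := [seq level_ideal P k | k <- iota 0 r.+2].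

Lemma all_order_ideal_levels : all (@order_ideal _ P) level_ideals.
Proof. by apply/allP => _ /mapP[k _ ->]; apply: order_ideal_level. Qed.

Lemma count_togp_levels p : count (togp p) level_ideals = 1%N.
Proof.
rewrite count_map (eq_count (togp_level_ideal p)) count_uniq_mem ?iota_uniq //.
by rewrite mem_iota ltnS leqW // (prank_le graded).
Qed.

Lemma count_togm_levels p : count (togm p) level_ideals = 1%N.
Proof.
rewrite count_map (@eq_in_count _ _ (pred1 (prank p).+1)); last first.
  move=> k; rewrite mem_iota ltnS => /andP[_ le_kr] /=.
  by rewrite (togm_level_ideal graded).
by rewrite count_uniq_mem ?iota_uniq // mem_iota !ltnS (prank_le graded).
Qed.

Variable R : realFieldType.

Lemma toggle_symmetric_levels : toggle_symmetric (empirical R level_ideals).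
Proof.
move=> p; rewrite !expect_empirical ?all_order_ideal_levels //.
by rewrite !sumr_count count_togp_levels count_togm_levels.
Qed.

Lemma sum_ddeg_levels : \sum_(I <- level_ideals) (ddeg I)%:R = #|P|%:R :> R.
Proof.
rewrite (eq_big_seq (fun I => \sum_(p : P) (togm p I)%:R)); last first.
  move=> I /(allP all_order_ideal_levels) idI.
  rewrite ddeg_togm // -sum1_card natr_sum big_mkcond.
  by apply: eq_bigr => p _; rewrite inE; case: togm.
rewrite exchange_big /= -sum1_card natr_sum; apply: eq_bigr => p _.
by rewrite sumr_count count_togm_levels.
Qed.

End LevelDistribution.

Theorem proposition3p8 (R : realFieldType) (d : Order.disp_t) (P : finPOrderType d)
    (r : nat) (hgr : graded_rank P r) (htCDE : tCDE P R) :
  expect (@uni _ P R) (fun I => (ddeg I)%:R) = (#|P|%:R / (r.+2)%:R : R).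
Proof.
have ids := all_order_ideal_levels P r.
have levels_distr := is_distr_empirical R ids isT.
rewrite -(htCDE _ levels_distr (toggle_symmetric_levels hgr R)).
by rewrite expect_empirical // (sum_ddeg_levels hgr) size_map size_iota.
Qed.
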